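(* Let $\mathbb{G}=(\mathcal{V},\mathcal{E})$ be a connected undirected graph on $\mathcal{V}=\{1,\dots,m\}$ with $\bar m$ edges. For each edge $(i,j)$, in either order, let $A_{ij}\in\mathbb{R}^{d_{ij}\times n}$ have full row rank and $\boldsymbol{b}_{ij}\in\mathbb{R}^{d_{ij}}$, with $A_{ij}=A_{ji}$, $\boldsymbol{b}_{ij}=-\boldsymbol{b}_{ji}$. Let $\boldsymbol{f}_i:\mathbb{R}^n\to\mathbb{R}$ be continuously differentiable and convex, $\boldsymbol{f}(\boldsymbol{x})=\sum_i\boldsymbol{f}_i(\boldsymbol{x}_i)$, and assume the problem $\min\sum_i\boldsymbol{f}_i(\boldsymbol{x}_i)$ subject to $A_{ij}(\boldsymbol{x}_i-\boldsymbol{x}_j)=\boldsymbol{b}_{ij}$ for all $(i,j)\in\mathcal{E}$ has a solution, and that $\ker\bar H'\cap\operatorname{image}\bar P=\{\boldsymbol{0}\}$. Define the augmented Lagrangian $\boldsymbol{F}:\mathbb{R}^{mn}\times\mathbb{R}^{mn}\to\mathbb{R}$, $$\boldsymbol{F}(\boldsymbol{x},\boldsymbol{\lambda})=\boldsymbol{f}(\boldsymbol{x})+\boldsymbol{\lambda}'\bar H'\bar P(\bar H\boldsymbol{x}-\bar{\boldsymbol{b}})+\tfrac12\|\bar P(\bar H\boldsymbol{x}-\bar{\boldsymbol{b}})\|^2,$$ and the dynamics $$\dot{\boldsymbol{x}}=-\nabla\boldsymbol{f}(\boldsymbol{x})-\bar H'\bar P\bar H\boldsymbol{\lambda}-\bar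 H'\bar P(\bar H\boldsymbol{x}-\bar{\boldsymbol{b}}),\qquad \dot{\boldsymbol{\lambda}}=\bar H'\bar P(\bar H\boldsymbol{x}-\bar{\boldsymbol{b}}).$$ Then every equilibrium $(\bar{\boldsymbol{x}},\bar{\boldsymbol{\lambda}})$ of these dynamics is a global min-max saddle point of $\boldsymbol{F}$, i.e. $\boldsymbol{F}(\bar{\boldsymbol{x}},\boldsymbol{\lambda})\le\boldsymbol{F}(\bar{\boldsymbol{x}},\bar{\boldsymbol{\lambda}})\le\boldsymbol{F}(\boldsymbol{x},\bar{\boldsymbol{\lambda}})$ for all $\boldsymbol{x},\boldsymbol{\lambda}\in\mathbb{R}^{mn}$.
   Context: $\boldsymbol{x}=\mathrm{col}\{\boldsymbol{x}_1,\dots,\boldsymbol{x}_m\}$, $'$ denotes transpose, $\|\cdot\|$ the Euclidean norm. $P_{ij}=A_{ij}'(A_{ij}A_{ij}')^{-1}A_{ij}$, $\bar{\boldsymbol{b}}_{ij}=A_{ij}'(A_{ij}A_{ij}')^{-1}\boldsymbol{b}_{ij}$. With a fixed enumeration/orientation of edges $(i_1,j_1),\dots,(i_{\bar m},j_{\bar m})$: $\bar P=\mathrm{diag}\{P_{i_1j_1},\dots,P_{i_{\bar m}j_{\bar m}}\}$ (block diagonal), $\bar{\boldsymbol{b}}=\mathrm{col}\{\bar{\boldsymbol{b}}_{i_lj_l}\}_{l=1}^{\bar m}$, $H\in\mathbb{R}^{\bar m\times m}$ the oriented incidence matrix whose $l$-th row has $1$ in column $i_l$, $-1$ in column $j_l$,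 $0$ elsewhere, $\bar H=H\otimes I_n$. *)

From HB Require Import structures.
From mathcomp Require Import all_boot all_order all_algebra.
From mathcomp Require Import all_classical all_reals all_analysis.
Set Implicit Arguments. Unset Strict Implicit. Unset Printing Implicit Defensive.
Import Order.TTheory GRing.Theory Num.Theory.
Import numFieldNormedType.Exports.
Local Open Scope ring_scope.

(* A vector of R^{mn} is represented as its column decomposition
   x = col{x_1,...,x_m}, i.e. a function 'I_m -> 'cV_n. *)
Section Defs.
Variable R : realType.

Definition dotv n (u v : 'cV[R]_n) : R := \sum_(k < n) u k 0 * v k 0.

Definition dotb (K n : nat) (x y : 'I_K -> 'cV[R]_n) : R :=
  \sum_(i < K) dotv (x i) (y i).
Definition sqnormb (K n : nat) (x : 'I_K -> 'cV[R]_n) : R := dotb x x.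

Definition projA d n (A : 'M[R]_(d, n)) : 'M[R]_n :=
  A^T *m invmx (A *m A^T) *m A.
Definition bbarA d n (A : 'M[R]_(d, n)) (b : 'cV[R]_d) : 'cV[R]_n :=
  A^T *m invmx (A *m A^T) *m b.

(* Given the oriented edge enumeration ends : 'I_mb -> 'I_m * 'I_m:
   Hbar = H (x) I_n, its transpose, Pbar = diag{P_l}. *)
Variables (m n mb : nat) (ends : 'I_mb -> 'I_m * 'I_m).

Definition Hbar (x : 'I_m -> 'cV[R]_n) : 'I_mb -> 'cV[R]_n :=
  fun l => x (ends l).1 - x (ends l).2.

Definition HbarT (y : 'I_mb -> 'cV[R]_n) : 'I_m -> 'cV[R]_n :=
  fun i => \sum_(l < mb)
    ((if (ends l).1 == i then y l else 0) - (if (ends l).2 == i then y l else 0)).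

Definition Pbar (P : 'I_m -> 'I_m -> 'M[R]_n) (y : 'I_mb -> 'cV[R]_n)
  : 'I_mb -> 'cV[R]_n := fun l => P (ends l).1 (ends l).2 *m y l.

Definition bbar (bb : 'I_m -> 'I_m -> 'cV[R]_n) : 'I_mb -> 'cV[R]_n :=
  fun l => bb (ends l).1 (ends l).2.

End Defs.

Definition C1_with_grad (R : realType) n (f : 'cV[R]_n -> R)
  (g : 'cV[R]_n -> 'cV[R]_n) : Prop :=
  (forall x, differentiable f x /\ forall v, 'd f x v = dotv (g x) v)
  /\ continuous g.

Definition convex_fun (R : realType) n (f : 'cV[R]_n -> R) : Prop :=
  forall (x y : 'cV[R]_n) (t : R), 0 <= t <= 1 ->
    f (t *: x + (1 - t) *: y) <= t * f x + (1 - t) * f y.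

From HB Require Import structures.
From mathcomp Require Import all_boot all_order all_algebra.
From mathcomp Require Import all_classical all_reals all_analysis.
From mathcomp Require Import lra.
Set Implicit Arguments. Unset Strict Implicit. Unset Printing Implicit Defensive.
Import Order.TTheory GRing.Theory Num.Theory.
Import numFieldNormedType.Exports.
Local Open Scope classical_set_scope.
Local Open Scope ring_scope.

(* At an equilibrium the vector u := Pbar (Hbar xe - bbar) lies in the image of
   Pbar and, by the lambda-equation, in ker Hbar'; hence u = 0.  So F xe lam does
   not depend on lam, which gives the left inequality with equality.  The
   x-equation says grad f (xe) = - Hbar' Pbar Hbar lame, and the gradient
   inequality of the convex f gives
     f x >= f xe - <lame, Hbar' Pbar Hbar (x - xe)>.
   Because u = 0, Pbar Hbar (x - xe) = Pbar (Hbar x - bbar), so the right-hand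
   side is f xe minus the multiplier term of F x lame; the penalty term of F is
   nonnegative.  Besides convexity, the only property of the data used is the
   symmetry of the projections P_ij, which makes Hbar' Pbar Hbar self-adjoint. *)

Section InnerProduct.
Variable R : realType.

Lemma dotvE n (u v : 'cV[R]_n) : dotv u v = (u^T *m v) 0 0.
Proof. by rewrite /dotv mxE; apply: eq_bigr => k _; rewrite mxE. Qed.

Lemma dotvC n (u v : 'cV[R]_n) : dotv u v = dotv v u.
Proof. by apply: eq_bigr => k _; rewrite mulrC. Qed.

Lemma dotv0r n (u : 'cV[R]_n) : dotv u 0 = 0.
Proof. by rewrite dotvE mulmx0 mxE. Qed.

Lemma dotvBr n (u v w : 'cV[R]_n) : dotv u (v - w) = dotv u v - dotv u w.
Proof. by rewrite !dotvE mulmxBr !mxE. Qed.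

Lemma dotvNl n (u v : 'cV[R]_n) : dotv (- u) v = - dotv u v.
Proof. by rewrite !dotvE linearN mulNmx !mxE. Qed.

Lemma dotvBl n (u v w : 'cV[R]_n) : dotv (v - w) u = dotv v u - dotv w u.
Proof. by rewrite dotvC dotvBr !(dotvC u). Qed.

Lemma dotv_sumr n I (r : seq I) (u : 'cV[R]_n) (w : I -> 'cV[R]_n) :
  dotv u (\sum_(l <- r) w l) = \sum_(l <- r) dotv u (w l).
Proof. by rewrite dotvE mulmx_sumr summxE; apply: eq_bigr => l _; rewrite dotvE. Qed.

Lemma dotv_ge0 n (u : 'cV[R]_n) : 0 <= dotv u u.
Proof. by apply: sumr_ge0 => k _; rewrite -expr2 sqr_ge0. Qed.

Lemma dotv_mulmx_sym n (S : 'M[R]_n) (u v : 'cV[R]_n) :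
  S^T = S -> dotv u (S *m v) = dotv (S *m u) v.
Proof. by move=> S_sym; rewrite !dotvE trmx_mul S_sym mulmxA. Qed.

Lemma projA_sym d n (A : 'M[R]_(d, n)) : (projA A)^T = projA A.
Proof. by rewrite /projA !trmx_mul trmxK trmx_inv trmx_mul trmxK mulmxA. Qed.

Lemma dotbC K n (x y : 'I_K -> 'cV[R]_n) : dotb x y = dotb y x.
Proof. by apply: eq_bigr => i _; rewrite dotvC. Qed.

Lemma dotbNl K n (x y : 'I_K -> 'cV[R]_n) : dotb (fun i => - x i) y = - dotb x y.
Proof. by rewrite /dotb -sumrN; apply: eq_bigr => i _; rewrite dotvNl. Qed.

Lemma dotb0r K n (x y : 'I_K -> 'cV[R]_n) : (forall i, y i = 0) -> dotb x y = 0.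
Proof. by move=> y0; rewrite /dotb big1 // => i _; rewrite y0 dotv0r. Qed.

Lemma sqnormb_ge0 K n (x : 'I_K -> 'cV[R]_n) : 0 <= sqnormb x.
Proof. by apply: sumr_ge0 => i _; apply: dotv_ge0. Qed.

End InnerProduct.

Section IncidenceOperators.
Variables (R : realType) (m n mb : nat) (ends : 'I_mb -> 'I_m * 'I_m).
Variable P : 'I_m -> 'I_m -> 'M[R]_n.
Hypothesis P_sym : forall i j, (P i j)^T = P i j.

Lemma dotb_HbarT (u : 'I_m -> 'cV[R]_n) (y : 'I_mb -> 'cV[R]_n) :
  dotb u (HbarT ends y) = dotb (Hbar ends u) y.
Proof.
rewrite /dotb /HbarT; under eq_bigr => i _ do rewrite dotv_sumr.
rewrite exchange_big /=; apply: eq_bigr => l _.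
have dotv_if c v : dotv (u v) (if c then y l else 0) = if c then dotv (u v) (y l) else 0.
  by case: c; rewrite ?dotv0r.
under eq_bigr => i _ do rewrite dotvBr !dotv_if.
rewrite sumrB /Hbar dotvBl -!big_mkcond.
by rewrite !(big_pred1 _ (fun i => eq_sym _ i)).
Qed.

Lemma dotb_Pbar (y z : 'I_mb -> 'cV[R]_n) : dotb y (Pbar ends P z) = dotb (Pbar ends P y) z.
Proof. by apply: eq_bigr => l _; rewrite dotv_mulmx_sym. Qed.

Lemma HbarT_Pbar_Hbar_sym (u v : 'I_m -> 'cV[R]_n) :
  dotb u (HbarT ends (Pbar ends P (Hbar ends v)))
  = dotb v (HbarT ends (Pbar ends P (Hbar ends u))).
Proof. by rewrite !dotb_HbarT dotb_Pbar dotbC. Qed.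

Lemma Pbar_residual_shift (c : 'I_mb -> 'cV[R]_n) (x y : 'I_m -> 'cV[R]_n) :
  (forall l, Pbar ends P (fun l => Hbar ends x l - c l) l = 0) ->
  Pbar ends P (fun l => Hbar ends y l - c l) = Pbar ends P (Hbar ends (fun i => y i - x i)).
Proof.
move=> res_x0; apply/funext => l; rewrite -[LHS]subr0 -(res_x0 l) /Pbar -mulmxBr.
by congr (_ *m _); rewrite /Hbar; apply/matrixP => k j; rewrite !mxE; lra.
Qed.

End IncidenceOperators.

Section ConvexFirstOrder.
Variables (R : realType) (n : nat) (f : 'cV[R]_n -> R).
Hypothesis f_cvx : convex_fun f.

Lemma convex_fun_secant_le (x y : 'cV[R]_n) (h : R) : 0 < h <= 1 ->
  (f (h *: (y - x) + x) - f x) / h <= f y - f x.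
Proof.
case/andP=> h_gt0 h_le1; rewrite ler_pdivrMr //.
have -> : h *: (y - x) + x = h *: y + (1 - h) *: x.
  by rewrite scalerBr scalerBl scale1r [x - _]addrC addrA.
have := f_cvx y x (t := h); rewrite (ltW h_gt0) h_le1 => /(_ isT); nra.
Qed.

Lemma convex_fun_diff_le (x y : 'cV[R]_n) :
  differentiable f x -> f x + 'd f x (y - x) <= f y.
Proof.
move=> f_dx; rewrite -deriveE //.
have secant_le : \forall h \near (0 : R)^'+,
    h^-1 *: ((f \o shift x) (h *: (y - x)) - f x) <= f y - f x.
  near=> h; rewrite /= -[h^-1 *: _]/(h^-1 * _) mulrC convex_fun_secant_le //.
  apply/andP; split; near: h; [exact: nbhs_right_gt | exact/nbhs_right_le/ltr01].
have := cvgr_to_le (cvg_dnbhs_at_right (diff_derivable f_dx)) secant_le.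
by move=> /(_ (at_right_proper_filter _)); rewrite -/(derive f x (y - x)); lra.
Unshelve. all: by end_near.
Qed.

End ConvexFirstOrder.

Lemma sum_convex_grad_le (R : realType) (m n : nat)
    (f : 'I_m -> 'cV[R]_n -> R) (g : 'I_m -> 'cV[R]_n -> 'cV[R]_n) (x y : 'I_m -> 'cV[R]_n) :
  (forall i, C1_with_grad (f i) (g i)) -> (forall i, convex_fun (f i)) ->
  \sum_(i < m) f i (x i) + dotb (fun i => g i (x i)) (fun i => y i - x i)
  <= \sum_(i < m) f i (y i).
Proof.
move=> f_C1 f_cvx; rewrite /dotb -big_split; apply: ler_sum => i _ /=.
have [/(_ (x i)) [f_dx dfE] _] := f_C1 i.
by rewrite -dfE convex_fun_diff_le.
Qed.

Theorem lemma2 (R : realType) (m n mb : nat)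
  (e : rel 'I_m) (ends : 'I_mb -> 'I_m * 'I_m)
  (d : 'I_m -> 'I_m -> nat)
  (A : forall i j : 'I_m, 'M[R]_(d i j, n))
  (b : forall i j : 'I_m, 'cV[R]_(d i j))
  (f : 'I_m -> 'cV[R]_n -> R) (gf : 'I_m -> 'cV[R]_n -> 'cV[R]_n)
  (* undirected connected graph on 'I_m *)
  (e_sym : symmetric e) (e_irr : irreflexive e)
  (e_conn : forall i j, connect e i j)
  (* ends enumerates the edges, each exactly once with a fixed orientation *)
  (ends_edge : forall l, e (ends l).1 (ends l).2)
  (ends_onto : forall i j, e i j -> exists l, ends l = (i, j) \/ ends l = (j, i))
  (ends_inj : forall l l', ends l = ends l' \/ ends l = ((ends l').2, (ends l').1) -> l = l')
  (* data on edges *)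
  (A_full : forall i j, e i j -> row_free (A i j))
  (A_sym : forall i j, e i j -> exists h : d i j = d j i,
      castmx (h, erefl n) (A i j) = A j i /\ castmx (h, erefl 1%N) (b i j) = - b j i)
  (* objective *)
  (f_C1 : forall i, C1_with_grad (f i) (gf i))
  (f_cvx : forall i, convex_fun (f i))
  (sol_ex : exists x : 'I_m -> 'cV[R]_n,
      (forall i j, e i j -> A i j *m (x i - x j) = b i j) /\
      forall y : 'I_m -> 'cV[R]_n,
        (forall i j, e i j -> A i j *m (y i - y j) = b i j) ->
        \sum_(i < m) f i (x i) <= \sum_(i < m) f i (y i))
  :
  let P := fun i j => projA (A i j) in
  let bb := fun i j => bbarA (A i j) (b i j) in
  (* ker Hbar' /\ image Pbar = {0} *)
  (forall y : 'I_mb -> 'cV[R]_n,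
      (forall i, HbarT ends y i = 0) -> (exists z, y = Pbar ends P z) -> forall l, y l = 0) ->
  let res := fun x : 'I_m -> 'cV[R]_n => fun l => Hbar ends x l - bbar ends bb l in
  let F := fun x lam : 'I_m -> 'cV[R]_n =>
    \sum_(i < m) f i (x i)
    + dotb lam (HbarT ends (Pbar ends P (res x)))
    + 2^-1 * sqnormb (Pbar ends P (res x)) in
  forall xe lame : 'I_m -> 'cV[R]_n,
  (* equilibrium of the dynamics *)
  (forall i, - gf i (xe i) - HbarT ends (Pbar ends P (Hbar ends lame)) i
             - HbarT ends (Pbar ends P (res xe)) i = 0) ->
  (forall i, HbarT ends (Pbar ends P (res xe)) i = 0) ->
  forall x lam : 'I_m -> 'cV[R]_n,
    F xe lam <= F xe lame /\ F xe lame <= F x lame.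
Proof.
move=> P bb ker_img0 res F xe lame eq_x eq_lam x lam.
have P_sym i j : (P i j)^T = P i j by exact: projA_sym.
have Pres_xe0 l : Pbar ends P (res xe) l = 0 by apply: ker_img0 => //; exists (res xe).
have F_xe la : F xe la = \sum_(i < m) f i (xe i).
  by rewrite /F /sqnormb !dotb0r // mulr0 !addr0.
split; first by rewrite !F_xe.
have grad_xe : (fun i => gf i (xe i)) = fun i => - HbarT ends (Pbar ends P (Hbar ends lame)) i.
  apply/funext => i; apply/eqP.
  by have := eq_x i; rewrite eq_lam subr0 => /eqP; rewrite subr_eq0 eqr_oppLR.
have := sum_convex_grad_le xe x f_C1 f_cvx.
rewrite F_xe /F (Pbar_residual_shift x Pres_xe0) grad_xe dotbNl dotbC.
rewrite (HbarT_Pbar_Hbar_sym _ P_sym).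
have := sqnormb_ge0 (Pbar ends P (Hbar ends (fun i => x i - xe i))); lra.
Qed.
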